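(* For all even integers $n\ge0$ and real numbers $a\ge1$, $x\in(-1,1)$, we have $\Lambda_{n,a}(x)\ge1$. Equality holds if and only if $n=0$, or $n=2$, $a=1$, $x=-1/2$.
   Context: $U_j$ denotes the Chebyshev polynomial of the second kind of degree $j$, i.e. $U_j(\cos t)=\sin((j+1)t)/\sin t$. For a real number $a$ and integers $0\le m$, $\binom{m+a}{m}=\frac{(a+1)(a+2)\cdots(a+m)}{m!}$ (equal to $1$ when $m=0$). For an integer $n\ge0$, $\Lambda_{n,a}(x)=\sum_{j=0}^n\binom{n+a-j}{n-j}U_j(x)$. *)

From Stdlib Require Import Reals Lra Lia Arith Factorial.
Open Scope R_scope.

(* Chebyshev polynomials of the second kind, via the standard recurrence
   U_0 = 1, U_1 = 2x, U_{j+2} = 2x U_{j+1} - U_j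
   (equivalently U_j(cos t) = sin((j+1)t)/sin t). *)
Fixpoint chebU_pair (j : nat) (x : R) : R * R :=
  match j with
  | O => (1, 2 * x)
  | S k => let (u, v) := chebU_pair k x in (v, 2 * x * v - u)
  end.

Definition chebU (j : nat) (x : R) : R := fst (chebU_pair j x).

(* generalized binomial binom(m+a, m) = (a+1)(a+2)...(a+m)/m! *)
Fixpoint rising_prod (a : R) (m : nat) : R :=
  match m with
  | O => 1
  | S k => rising_prod a k * (a + INR (S k))
  end.

Definition gbinom (m : nat) (a : R) : R := rising_prod a m / INR (fact m).

Definition Lambda (n : nat) (a x : R) : R :=
  sum_f_R0 (fun j => gbinom (n - j) a * chebU j x) n.

From Stdlib Require Import Reals Lra Lia Factorial.
Open Scope R_scope.

(* Put x = 2c^2 - 1, i.e. c = cos(t/2) when x = cos t.  The partial sums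
   S_m = Lambda_{m,0}(x) = sum_{j<=m} U_j(x) satisfy S_{m+1} + S_m = U_{m+1}(c)^2,
   so Lambda_{m,1} = sum_{j<=m} S_j grows by the square U_{m+2}(c)^2 every two
   steps: Lambda_{2p,1} >= Lambda_{0,1} = 1, Lambda_{m,1} >= 0, and
   Lambda_{2p,1} > 1 once p >= 2.  Since the generating function of
   Lambda_{n,a} is (1-t)^(-a-1) sum_j U_j t^j, Lambda_{.,a} is the convolution of
   the weights binom(k+a-2, k), nonnegative for a >= 1, with Lambda_{.,1}.
   Keeping two terms, Lambda_{n,a} >= Lambda_{n,1} + (a-1) Lambda_{n-1,1} >= 1,
   and equality forces n = 2, Lambda_{2,1} = 1 + (2x+1)^2 = 1 and a = 1. *)

Definition convolution (f g : nat -> R) (n : nat) : R :=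
  sum_f_R0 (fun k => f k * g (n - k)%nat) n.

Lemma sum_f_R0_rev (f : nat -> R) n :
  sum_f_R0 f n = sum_f_R0 (fun j => f (n - j)%nat) n.
Proof.
  induction n as [|n IH]; [reflexivity|].
  rewrite (decomp_sum (fun j => f (S n - j)%nat)) by lia.
  simpl pred. rewrite tech5, IH, Nat.sub_0_r.
  simpl. lra.
Qed.

Lemma sum_f_R0_triangle_S (F : nat -> nat -> R) n :
  sum_f_R0 (fun j => sum_f_R0 (F j) (S n - j)) (S n) =
  sum_f_R0 (fun j => sum_f_R0 (F j) (n - j)) n
  + sum_f_R0 (fun j => F j (S n - j)%nat) (S n).
Proof.
  rewrite !tech5, Nat.sub_diag.
  rewrite (sum_eq (fun j => sum_f_R0 (F j) (S n - j))
             (fun j => sum_f_R0 (F j) (n - j) + F j (S n - j)%nat)).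
  - rewrite sum_plus. simpl. lra.
  - intros j Hj. replace (S n - j)%nat with (S (n - j)) by lia. apply tech5.
Qed.

Lemma sum_f_R0_triangle_swap (F : nat -> nat -> R) n :
  sum_f_R0 (fun j => sum_f_R0 (F j) (n - j)) n =
  sum_f_R0 (fun k => sum_f_R0 (fun j => F j k) (n - k)) n.
Proof.
  induction n as [|n IH]; [reflexivity|].
  rewrite (sum_f_R0_triangle_S F), (sum_f_R0_triangle_S (fun k j => F j k)), IH.
  f_equal. rewrite sum_f_R0_rev. apply sum_eq. intros j Hj.
  now replace (S n - (S n - j))%nat with j by lia.
Qed.

Lemma convolution_ext (f f' g g' : nat -> R) n :
  (forall k, f k = f' k) -> (forall k, g k = g' k) ->
  convolution f g n = convolution f' g' n.
Proof. intros Hf Hg. apply sum_eq. intros k _. now rewrite Hf, Hg. Qed.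

Lemma convolution_comm (f g : nat -> R) n :
  convolution f g n = convolution g f n.
Proof.
  unfold convolution. rewrite sum_f_R0_rev. apply sum_eq. intros k Hk.
  replace (n - (n - k))%nat with k by lia. apply Rmult_comm.
Qed.

Lemma convolution_CA (f g h : nat -> R) n :
  convolution f (convolution g h) n = convolution g (convolution f h) n.
Proof.
  unfold convolution.
  rewrite (sum_eq _ (fun k => sum_f_R0 (fun i => f k * g i * h (n - k - i)%nat) (n - k)))
    by (intros k _; rewrite scal_sum; apply sum_eq; intros; ring).
  rewrite (sum_f_R0_triangle_swap (fun k i => f k * g i * h (n - k - i)%nat)).
  apply sum_eq. intros i _. rewrite scal_sum. apply sum_eq. intros k _.
  replace (n - k - i)%nat with (n - i - k)%nat by lia. ring.
Qed.

Lemma convolution_assoc (f g h : nat -> R) n :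
  convolution (convolution f g) h n = convolution f (convolution g h) n.
Proof.
  rewrite convolution_comm, convolution_CA.
  apply convolution_ext; [reflexivity|]. intro k. apply convolution_comm.
Qed.

Lemma rising_prod_S s m : rising_prod s (S m) = rising_prod s m * (s + INR (S m)).
Proof. reflexivity. Qed.

Lemma gbinom_0_l s : gbinom 0 s = 1.
Proof. unfold gbinom; simpl. field. Qed.

Lemma gbinom_1_l s : gbinom 1 s = s + 1.
Proof. unfold gbinom; simpl. field. Qed.

Lemma gbinom_0_r m : gbinom m 0 = 1.
Proof.
  unfold gbinom.
  assert (Hprod : rising_prod 0 m = INR (fact m)).
  { induction m as [|m IH]; [reflexivity|].
    rewrite rising_prod_S, IH, fact_simpl, mult_INR. ring. }
  rewrite Hprod. field. apply INR_fact_neq_0.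
Qed.

Lemma gbinom_neg1_S m : gbinom (S m) (-1) = 0.
Proof.
  unfold gbinom.
  assert (Hprod : rising_prod (-1) (S m) = 0).
  { induction m as [|m IH]; rewrite rising_prod_S; [simpl|rewrite IH]; ring. }
  rewrite Hprod. unfold Rdiv. ring.
Qed.

Lemma rising_prod_pred s m : rising_prod (s - 1) (S m) = s * rising_prod s m.
Proof.
  induction m as [|m IH]; [simpl; ring|].
  rewrite (rising_prod_S (s - 1)), IH, rising_prod_S, !S_INR. ring.
Qed.

Lemma gbinom_pascal m s : gbinom (S m) s = gbinom m s + gbinom (S m) (s - 1).
Proof.
  unfold gbinom. rewrite rising_prod_pred, rising_prod_S, fact_simpl, mult_INR, S_INR.
  pose proof (INR_fact_neq_0 m). pose proof (pos_INR m).
  field. lra.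
Qed.

Lemma gbinom_hockey_stick m s :
  gbinom m s = convolution (fun k => gbinom k (s - 1)) (fun k => gbinom k 0) m.
Proof.
  unfold convolution.
  rewrite (sum_eq _ (fun k => gbinom k (s - 1))) by (intros; rewrite gbinom_0_r; ring).
  induction m as [|m IH].
  - simpl. now rewrite !gbinom_0_l.
  - now rewrite gbinom_pascal, IH, tech5.
Qed.

Lemma gbinom_convolution m s :
  gbinom m s = convolution (fun k => gbinom k (s - 2)) (fun k => gbinom k 1) m.
Proof.
  transitivity (convolution (convolution (fun k => gbinom k (s - 2)) (fun k => gbinom k 0))
                            (fun k => gbinom k 0) m).
  { rewrite gbinom_hockey_stick. apply convolution_ext; intro k; [|reflexivity].
    rewrite gbinom_hockey_stick. now replace (s - 1 - 1) with (s - 2) by ring. }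
  rewrite convolution_assoc. apply convolution_ext; [reflexivity|].
  intro k. rewrite (gbinom_hockey_stick k 1). now replace (1 - 1) with 0 by ring.
Qed.

Lemma gbinom_nonneg m s : -1 <= s -> 0 <= gbinom m s.
Proof.
  intro Hs. unfold gbinom. apply Rmult_le_pos.
  - induction m as [|m IH]; [simpl; lra|].
    rewrite rising_prod_S, S_INR. apply Rmult_le_pos; [exact IH|]. pose proof (pos_INR m). lra.
  - apply Rlt_le, Rinv_0_lt_compat, INR_fact_lt_0.
Qed.

Lemma chebU_0 x : chebU 0 x = 1.
Proof. reflexivity. Qed.

Lemma chebU_1 x : chebU 1 x = 2 * x.
Proof. reflexivity. Qed.

Lemma chebU_SS j x : chebU (S (S j)) x = 2 * x * chebU (S j) x - chebU j x.
Proof. unfold chebU. simpl. now destruct (chebU_pair j x). Qed.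

Lemma chebU_cassini j c :
  chebU (S j) c ^ 2 - 2 * c * chebU (S j) c * chebU j c + chebU j c ^ 2 = 1.
Proof.
  induction j as [|j IH]; [rewrite chebU_1, chebU_0; ring|].
  rewrite chebU_SS, <- IH. ring.
Qed.

Lemma chebU_sq_SS j c :
  chebU (S (S j)) c ^ 2 = 2 * (2 * c ^ 2 - 1) * chebU (S j) c ^ 2 - chebU j c ^ 2 + 2.
Proof. rewrite chebU_SS. pose proof (chebU_cassini j c). nra. Qed.

Lemma Lambda_0 a x : Lambda 0 a x = 1.
Proof. unfold Lambda. simpl. rewrite gbinom_0_l, chebU_0. ring. Qed.

Lemma Lambda_pascal n a x : Lambda (S n) a x = Lambda n a x + Lambda (S n) (a - 1) x.
Proof.
  unfold Lambda. rewrite !tech5, Nat.sub_diag, !gbinom_0_l.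
  rewrite (sum_eq (fun j => gbinom (S n - j) a * chebU j x)
             (fun j => gbinom (n - j) a * chebU j x + gbinom (S n - j) (a - 1) * chebU j x)).
  - rewrite sum_plus. ring.
  - intros j Hj. replace (S n - j)%nat with (S (n - j)) by lia. rewrite gbinom_pascal. ring.
Qed.

Lemma Lambda_neg1 n x : Lambda n (-1) x = chebU n x.
Proof.
  destruct n as [|n]; [apply Lambda_0|].
  unfold Lambda. rewrite tech5, Nat.sub_diag, gbinom_0_l.
  rewrite (sum_eq _ (fun _ => 0)), sum_cte; [ring|].
  intros j Hj. replace (S n - j)%nat with (S (n - j)) by lia.
  rewrite gbinom_neg1_S. ring.
Qed.

Lemma Lambda_convolution n a x :
  Lambda n a x = convolution (fun m => gbinom m a) (fun j => chebU j x) n.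
Proof.
  rewrite convolution_comm. apply sum_eq. intros j _. apply Rmult_comm.
Qed.

Lemma Lambda_convolution_Lambda1 n a x :
  Lambda n a x = convolution (fun k => gbinom k (a - 2)) (fun m => Lambda m 1 x) n.
Proof.
  rewrite Lambda_convolution.
  transitivity (convolution (convolution (fun k => gbinom k (a - 2)) (fun k => gbinom k 1))
                            (fun j => chebU j x) n).
  { apply convolution_ext; intro; [apply gbinom_convolution | reflexivity]. }
  rewrite convolution_assoc. apply convolution_ext; [reflexivity|].
  intro m. symmetry. apply Lambda_convolution.
Qed.

Lemma Lambda0_S m x : Lambda (S m) 0 x = Lambda m 0 x + chebU (S m) x.
Proof. rewrite Lambda_pascal. now replace (0 - 1) with (-1) by ring; rewrite Lambda_neg1. Qed.

Lemma Lambda1_S m x : Lambda (S m) 1 x = Lambda m 1 x + Lambda (S m) 0 x.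
Proof. rewrite Lambda_pascal. now replace (1 - 1) with 0 by ring. Qed.

Lemma Lambda0_SS m x : Lambda (S (S m)) 0 x = 2 * x * Lambda (S m) 0 x - Lambda m 0 x + 1.
Proof.
  induction m as [|m IH].
  - rewrite !Lambda0_S, Lambda_0, chebU_SS, chebU_1, chebU_0. ring.
  - rewrite (Lambda0_S (S (S m))), chebU_SS.
    replace (chebU (S (S m)) x) with (Lambda (S (S m)) 0 x - Lambda (S m) 0 x)
      by (rewrite (Lambda0_S (S m)); ring).
    replace (chebU (S m) x) with (Lambda (S m) 0 x - Lambda m 0 x)
      by (rewrite (Lambda0_S m); ring).
    rewrite IH. ring.
Qed.

Lemma Lambda0_add_sq m c :
  Lambda (S m) 0 (2 * c ^ 2 - 1) + Lambda m 0 (2 * c ^ 2 - 1) = chebU (S m) c ^ 2.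
Proof.
  set (x := 2 * c ^ 2 - 1).
  enough (H : Lambda (S m) 0 x + Lambda m 0 x = chebU (S m) c ^ 2 /\
              Lambda (S (S m)) 0 x + Lambda (S m) 0 x = chebU (S (S m)) c ^ 2) by apply H.
  induction m as [|m [IH IH']].
  - rewrite Lambda0_SS, Lambda0_S, Lambda_0, chebU_SS, chebU_1, chebU_0, chebU_1.
    unfold x. split; ring.
  - split; [exact IH'|].
    rewrite chebU_sq_SS, <- IH, <- IH', (Lambda0_SS (S m)), (Lambda0_SS m). fold x. ring.
Qed.

Lemma Lambda1_SS_sq m c :
  Lambda (S (S m)) 1 (2 * c ^ 2 - 1) = Lambda m 1 (2 * c ^ 2 - 1) + chebU (S (S m)) c ^ 2.
Proof. rewrite !Lambda1_S, <- Lambda0_add_sq. ring. Qed.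

Lemma cos_double_surj x : -1 <= x -> exists c, x = 2 * c ^ 2 - 1.
Proof.
  intro Hx. exists (sqrt ((1 + x) / 2)).
  rewrite <- Rsqr_pow2, Rsqr_sqrt; lra.
Qed.

Lemma Lambda1_SS_ge m x : -1 <= x -> Lambda m 1 x <= Lambda (S (S m)) 1 x.
Proof.
  intro Hx. destruct (cos_double_surj x Hx) as [c ->].
  rewrite Lambda1_SS_sq. pose proof (pow2_ge_0 (chebU (S (S m)) c)). lra.
Qed.

Lemma Lambda1_1 x : Lambda 1 1 x = 2 + 2 * x.
Proof. rewrite Lambda1_S, Lambda0_S, !Lambda_0, chebU_1. ring. Qed.

Lemma Lambda1_2 x : Lambda 2 1 x = 1 + (2 * x + 1) ^ 2.
Proof.
  rewrite Lambda1_S, Lambda1_1, Lambda0_SS, Lambda0_S, Lambda_0, chebU_1. ring.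
Qed.

Lemma Lambda1_nonneg m x : -1 <= x -> 0 <= Lambda m 1 x.
Proof.
  intro Hx.
  enough (H : 0 <= Lambda m 1 x /\ 0 <= Lambda (S m) 1 x) by apply H.
  induction m as [|m [IH IH']].
  - rewrite Lambda_0, Lambda1_1. lra.
  - split; [exact IH'|]. pose proof (Lambda1_SS_ge m x Hx). lra.
Qed.

Lemma Lambda1_even_ge1 p x : -1 <= x -> 1 <= Lambda (2 * p) 1 x.
Proof.
  intro Hx. induction p as [|p IH]; [rewrite Lambda_0; lra|].
  replace (2 * S p)%nat with (S (S (2 * p))) by lia.
  pose proof (Lambda1_SS_ge (2 * p) x Hx). lra.
Qed.

Lemma Lambda1_even_gt1 p x : -1 <= x -> (2 <= p)%nat -> 1 < Lambda (2 * p) 1 x.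
Proof.
  intros Hx Hp. induction Hp as [|p Hp IH].
  - destruct (cos_double_surj x Hx) as [c ->].
    change (2 * 2)%nat with 4%nat. rewrite !Lambda1_SS_sq, Lambda_0.
    assert (H2 : chebU 2 c = 4 * c ^ 2 - 1) by (rewrite !chebU_SS, chebU_1, chebU_0; ring).
    assert (H4 : chebU 4 c = 16 * c ^ 4 - 12 * c ^ 2 + 1)
      by (rewrite !chebU_SS, chebU_1, chebU_0; ring).
    rewrite H2, H4. pose proof (pow2_ge_0 (16 * c ^ 4 - 12 * c ^ 2 + 1)).
    destruct (Req_dec (4 * c ^ 2 - 1) 0) as [Hz|Hz].
    + rewrite Hz. replace (16 * c ^ 4 - 12 * c ^ 2 + 1) with (-1) by nra. lra.
    + pose proof (Rsqr_pos_lt _ Hz). rewrite Rsqr_pow2 in *. lra.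
  - replace (2 * S p)%nat with (S (S (2 * p))) by lia.
    pose proof (Lambda1_SS_ge (2 * p) x Hx). lra.
Qed.

Lemma sum_f_R0_ge_first_two (f : nat -> R) n :
  (forall k, 0 <= f k) -> (1 <= n)%nat -> f 0%nat + f 1%nat <= sum_f_R0 f n.
Proof.
  intros Hf Hn. destruct (Nat.eq_dec n 1) as [->|Hn1]; [simpl; lra|].
  rewrite (tech2 f 1 n) by lia.
  pose proof (cond_pos_sum (fun i => f (2 + i)%nat) (n - 2) (fun i => Hf _)).
  change (sum_f_R0 f 1) with (f 0%nat + f 1%nat). lra.
Qed.

Lemma Lambda_ge_Lambda1 n a x : 1 <= a -> -1 <= x -> (1 <= n)%nat ->
  Lambda n 1 x + (a - 1) * Lambda (n - 1) 1 x <= Lambda n a x.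
Proof.
  intros Ha Hx Hn. rewrite (Lambda_convolution_Lambda1 n a x).
  replace (Lambda n 1 x + (a - 1) * Lambda (n - 1) 1 x) with
    (gbinom 0 (a - 2) * Lambda (n - 0) 1 x + gbinom 1 (a - 2) * Lambda (n - 1) 1 x)
    by (rewrite gbinom_0_l, gbinom_1_l, Nat.sub_0_r; ring).
  apply (sum_f_R0_ge_first_two (fun k => gbinom k (a - 2) * Lambda (n - k) 1 x)); [|exact Hn].
  intro k. apply Rmult_le_pos; [apply gbinom_nonneg; lra | apply Lambda1_nonneg, Hx].
Qed.

Theorem theorem4p1 :
  forall (n : nat) (a x : R),
    Nat.Even n -> 1 <= a -> -1 < x < 1 ->
    1 <= Lambda n a x /\
    (Lambda n a x = 1 <-> (n = 0%nat \/ (n = 2%nat /\ a = 1 /\ x = -1/2))).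
Proof.
  intros n a x [p ->] Ha Hx.
  destruct p as [|p].
  { rewrite Lambda_0. split; [lra|]. split; auto. }
  assert (Hlow := Lambda_ge_Lambda1 (2 * S p) a x Ha ltac:(lra) ltac:(lia)).
  assert (Heven := Lambda1_even_ge1 (S p) x ltac:(lra)).
  assert (Hodd := Lambda1_nonneg (2 * S p - 1) x ltac:(lra)).
  split; [nra|]. split.
  - intro Heq. right. destruct p as [|p].
    + change (2 * 1)%nat with 2%nat in *. simpl (2 - 1)%nat in *.
      rewrite Lambda1_2, Lambda1_1 in Hlow.
      pose proof (pow2_ge_0 (2 * x + 1)).
      assert (Hsq : (2 * x + 1) ^ 2 = 0) by nra.
      repeat split; nra.
    + pose proof (Lambda1_even_gt1 (S (S p)) x ltac:(lra) ltac:(lia)). nra.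
  - intros [Hn | (Hn & -> & ->)]; [lia|].
    replace p with 0%nat by lia. change (2 * 1)%nat with 2%nat.
    rewrite Lambda1_2. lra.
Qed.
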